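(* Let $0\le k<n$, let $P_1,\dots,P_n$ be pairwise distinct columns of $\mathbb{S}$, and let $y_1\in P_1,\dots,y_k\in P_k$. Let $(\varepsilon_i^j)$ be any family in $\{0,1\}$ indexed by pairs $1\le i<j\le n$ with $j>k$. Then there exist $y_{k+1}\in P_{k+1},\dots,y_n\in P_n$ such that for all $1\le i<j\le n$ with $j>k$: $y_i\to y_j$ iff $\varepsilon_i^j=1$.
   Context: Directed graphs are simple and loopless ($x\to y$ denotes a directed edge, at most one direction between two distinct vertices). $\mathcal{S}$ is the class of finite such graphs in which $x\perp y:\Leftrightarrow\neg(x\to y\vee y\to x)$ is an equivalence relation (its classes are called columns) and satisfying the parity condition: for $x_1\neq x_2$, $y_1\neq y_2$ with $x_1\perp x_2$, $y_1\perp y_2$, the number of directed edges from $\{x_1,x_2\}$ to $\{y_1,y_2\}$ is even. $\mathbb{S}$ (the semigeneric directed graph) is the Fraïssé limit of $\mathcal{S}$, i.e. the countable homogeneous directed graph whose finite induced substructures are exactly the members of $\mathcal{S}$ up to isomorphism. *)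

From mathcomp Require Import all_boot.
Set Implicit Arguments. Unset Strict Implicit. Unset Printing Implicit Defensive.

Definition perp (V : Type) (E : rel V) (x y : V) : bool := ~~ E x y && ~~ E y x.

Definition dgraph (V : Type) (E : rel V) : Prop :=
  irreflexive E /\ (forall x y, E x y -> ~~ E y x).

Definition parity_cond (V : Type) (E : rel V) : Prop :=
  forall x1 x2 y1 y2, x1 <> x2 -> y1 <> y2 -> perp E x1 x2 -> perp E y1 y2 ->
    ~~ odd (E x1 y1 + E x1 y2 + E x2 y1 + E x2 y2).

Definition in_S (T : finType) (e : rel T) : Prop :=
  dgraph e /\
  (reflexive (perp e) /\ symmetric (perp e) /\ transitive (perp e)) /\
  parity_cond e.

Definition embedding (T V : Type) (e : rel T) (E : rel V) (f : T -> V) : Prop :=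
  injective f /\ (forall a b, e a b = E (f a) (f b)).

Definition induced_sub (V : countType) (E : rel V) (s : seq V) : rel (@seq_sub V s) :=
  fun a b => E (val a) (val b).

Definition age_is_S (V : countType) (E : rel V) : Prop :=
  (forall s : seq V, in_S (@induced_sub V E s)) /\
  (forall (T : finType) (e : rel T), in_S e -> exists f : T -> V, embedding e E f).

Definition homogeneous (V : countType) (E : rel V) : Prop :=
  forall (T : finType) (e : rel T) (f g : T -> V),
    embedding e E f -> embedding e E g ->
    exists sigma : V -> V,
      bijective sigma /\ (forall x y, E x y = E (sigma x) (sigma y)) /\
      (forall a, sigma (f a) = g a).

(* (V,E) is (a copy of) the semigeneric directed graph: countable, homogeneous,
   with age S; by Fraisse's theorem this determines it up to isomorphism. *)
Definition is_semigeneric (V : countType) (E : rel V) : Prop :=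
  dgraph E /\ age_is_S E /\ homogeneous E.

Definition is_column (V : Type) (E : rel V) (C : V -> Prop) : Prop :=
  exists x, forall y, C y <-> perp E x y.

From mathcomp Require Import all_boot.

Set Implicit Arguments.
Unset Strict Implicit.
Unset Printing Implicit Defensive.

(* Columns are built one at a time.  To place the next vertex v in the column
   of a representative x, with prescribed edges to vertices already chosen in
   other columns, consider the one-point extension in which v is perpendicular
   exactly to the vertices perpendicular to x and has a single edge, in the
   prescribed direction, to every other vertex.  Its only perpendicular pairs
   of distinct points are {v, x}, so the parity condition holds vacuously and
   the extension lies in S; since the age of the semigeneric graph is S,
   homogeneity prefix_solution it over the given finite set. *)

Lemma perpC (T : Type) (e : rel T) x y : perp e x y = perp e y x.
Proof. by rewrite /perp andbC. Qed.

Lemma perp_refl (T : Type) (e : rel T) : irreflexive e -> reflexive (perp e).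
Proof. by move=> e_irr x; rewrite /perp e_irr. Qed.

Section Semigeneric.

Variables (V : countType) (E : rel V).
Hypothesis HS : is_semigeneric E.

Let perpxx : reflexive (perp E) := perp_refl HS.1.1.

Lemma perp_trans : transitive (perp E).
Proof.
move=> y x z xy yz; have [_ [[age_sub _] _]] := HS.
pose s := [:: x; y; z].
have sx : x \in s by rewrite !inE eqxx.
have sy : y \in s by rewrite !inE eqxx orbT.
have sz : z \in s by rewrite !inE eqxx !orbT.
have [_ [[_ [_ perp_tr]] _]] := age_sub s.
exact: (perp_tr (SeqSub sy) (SeqSub sx) (SeqSub sz)).
Qed.

Lemma semigeneric_one_point_extension (s : seq V) (e : rel (option (seq_sub s))) :
    in_S e -> (forall a b, e (Some a) (Some b) = E (val a) (val b)) ->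
  exists v, forall a, E v (val a) = e None (Some a) /\ E (val a) v = e (Some a) None.
Proof.
move=> eS eE; have [_ [[_ age_sup] hom]] := HS.
have [f [f_inj fE]] := age_sup _ e eS.
have f_emb : embedding (@induced_sub V E s) E (fun a => f (Some a)).
  by split=> [a b /f_inj [] | a b]; rewrite -?fE.
have val_emb : embedding (@induced_sub V E s) E val by split; first exact: val_inj.
have [sigma [_ [sigmaE sigma_f]]] := hom _ _ _ _ f_emb val_emb.
by exists (sigma (f None)) => a; rewrite -sigma_f -!sigmaE !fE.
Qed.

Section ColumnExtension.

Variables (x : V) (g : V -> bool) (s : seq V).

Definition point (o : option (seq_sub s)) : V := if o is Some a then val a else x.

Definition column_ext : rel (option (seq_sub s)) := fun o1 o2 =>
  match o1, o2 with
  | Some a, Some b => E (val a) (val b)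
  | None, Some b => ~~ perp E x (val b) && ~~ g (val b)
  | Some a, None => ~~ perp E x (val a) && g (val a)
  | None, None => false
  end.

Lemma perp_column_ext o1 o2 : perp column_ext o1 o2 = perp E (point o1) (point o2).
Proof.
case: o1 o2 => [a|] [b|] //=; last by rewrite perpxx.
  by rewrite (perpC E) {1}/perp /=; case: (perp E x _); case: (g _).
by rewrite {1}/perp /=; case: (perp E x _); case: (g _).
Qed.

Lemma column_ext_in_S :
  x \in s -> {in s &, forall a b, perp E a b -> a = b} -> in_S column_ext.
Proof.
move=> sx s_sep; have [[Eirr Easym] _] := HS.
split; [split | split; [split; [|split] |]].
- by case=> [a|] //=; rewrite Eirr.
- case=> [a|] [b|] //=; first exact: Easym.
    by case: (perp E x _); case: (g _).
  by case: (perp E x _); case: (g _).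
- by move=> o; rewrite perp_column_ext perpxx.
- by move=> o1 o2; rewrite !perp_column_ext perpC.
- by move=> o2 o1 o3; rewrite !perp_column_ext; apply: perp_trans.
have perp_at_x o1 o2 : o1 <> o2 -> perp column_ext o1 o2 -> point o1 = x /\ point o2 = x.
  case: o1 o2 => [a|] [b|] ne; rewrite perp_column_ext //=.
  - by move/(s_sep _ _ (ssvalP a) (ssvalP b))/val_inj => ab; case: ne; rewrite ab.
  - by rewrite perpC => /(s_sep _ _ sx (ssvalP a)) ->.
  - by move/(s_sep _ _ sx (ssvalP b)) ->.
have no_edge_at_x o1 o2 : point o1 = x -> point o2 = x -> column_ext o1 o2 = false.
  move=> p1 p2; have : perp column_ext o1 o2 by rewrite perp_column_ext p1 p2 perpxx.
  by case/andP=> /negbTE.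
move=> x1 x2 y1 y2 nx ny px py.
have [x1x x2x] := perp_at_x _ _ nx px; have [y1x y2x] := perp_at_x _ _ ny py.
by rewrite !no_edge_at_x.
Qed.

End ColumnExtension.

Lemma semigeneric_column_extension (x : V) (t : seq V) (g : V -> bool) :
    {in t, forall w, ~~ perp E x w} -> {in t &, forall a b, perp E a b -> a = b} ->
  exists2 v, perp E x v & {in t, forall w, E w v = g w}.
Proof.
move=> t_x t_sep; pose s := x :: t.
have sx : x \in s by rewrite inE eqxx.
have s_sep : {in s &, forall a b, perp E a b -> a = b}.
  move=> a b; rewrite !inE => /predU1P[-> | ta] /predU1P[-> | tb] //.
  - by rewrite (negbTE (t_x _ tb)).
  - by rewrite perpC (negbTE (t_x _ ta)).
  - exact: t_sep.
have [v vE] := semigeneric_one_point_extension (column_ext_in_S g sx s_sep)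
  (fun _ _ => erefl).
exists v.
  by have [vx xv] := vE (SeqSub sx); rewrite /perp vx xv /= perpxx.
move=> w tw; have sw : w \in s by rewrite inE tw orbT.
by have [_ ->] := vE (SeqSub sw); rewrite /= t_x.
Qed.

Section Columns.

Variables (n : nat) (P : 'I_n -> V -> Prop).
Hypothesis P_column : forall i, is_column E (P i).
Hypothesis P_distinct : forall i j : 'I_n, i != j -> ~ (forall w, P i w <-> P j w).

Lemma column_iff_perp i w : P i w -> forall u, P i u <-> perp E w u.
Proof.
have [x Px] := P_column i; move=> /Px xw u.
split=> [/Px xu | wu]; last exact/Px/(perp_trans xw wu).
by apply: perp_trans xu; rewrite perpC.
Qed.

Lemma column_unique i i' w : P i w -> P i' w -> i = i'.
Proof.
move=> Piw Pi'w; case: (eqVneq i i') => // ne; case: (P_distinct ne) => u.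
exact: iff_trans (column_iff_perp Piw u) (iff_sym (column_iff_perp Pi'w u)).
Qed.

Lemma column_vertex_extension (m : 'I_n) (z : 'I_n -> V) (c : 'I_n -> bool) :
    (forall i : 'I_n, i < m -> P i (z i)) ->
  exists2 v, P m v & forall i : 'I_n, i < m -> E (z i) v = c i.
Proof.
move=> Pz; have [x Px] := P_column m.
pose t := [seq z i | i : 'I_n <- enum 'I_n & i < m].
pose g w := [exists i : 'I_n, [&& i < m, z i == w & c i]].
have t_z (i : 'I_n) : i < m -> z i \in t.
  by move=> im; rewrite map_f // mem_filter im mem_enum.
have z_t w : w \in t -> exists2 i : 'I_n, i < m & w = z i.
  by case/mapP=> i; rewrite mem_filter => /andP[im _] ->; exists i.
have z_sep (i i' : 'I_n) : i < m -> i' < m -> perp E (z i) (z i') -> i = i'.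
  by move=> im i'm /(column_iff_perp (Pz i im))/column_unique; apply; apply: Pz.
have t_x : {in t, forall w, ~~ perp E x w}.
  move=> _ /z_t[i im ->]; apply/negP => /Px Pmz.
  by have mi := column_unique Pmz (Pz i im); rewrite -mi ltnn in im.
have t_sep : {in t &, forall a b, perp E a b -> a = b}.
  by move=> _ _ /z_t[i im ->] /z_t[i' i'm ->] /z_sep-> //.
have [v xv vE] := semigeneric_column_extension g t_x t_sep.
exists v => [|i im]; first exact/Px.
rewrite vE ?t_z //; apply/existsP/idP => [[i' /and3P[i'm /eqP zi' ci']] | ci].
  by rewrite -(z_sep i' i) // zi' perpxx.
by exists i; rewrite im eqxx ci.
Qed.

Section Realization.

Variables (k : nat) (y : 'I_n -> V) (eps : 'I_n -> 'I_n -> bool).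

Definition prefix_solution (m : nat) (z : 'I_n -> V) : Prop :=
  [/\ forall i : 'I_n, i < k -> z i = y i,
      forall i : 'I_n, i < m -> P i (z i)
    & forall i j : 'I_n, i < j -> j < m -> k <= j -> E (z i) (z j) = eps i j].

Lemma prefix_solution_succ (j : 'I_n) (z : 'I_n -> V) :
  k <= j -> prefix_solution j z -> exists z', prefix_solution j.+1 z'.
Proof.
move=> kj [zy Pz Ez].
have [v Pv vE] := column_vertex_extension (fun i => eps i j) Pz.
exists (fun i => if i == j then v else z i); split.
- move=> i ik; suff /negbTE-> : i != j by exact: zy.
  by apply: contraTneq ik => ->; rewrite -leqNgt.
- move=> i; case: eqP => [-> // | ne]; rewrite ltnS leq_eqVlt.
  by case/orP=> [/eqP/val_inj ij | /Pz //]; case: ne.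
- move=> i i' ii' i'j ki'; rewrite ltnS in i'j.
  have /negbTE-> : i != j by rewrite neq_ltn (leq_trans ii' i'j).
  case: eqP => [-> | ne]; first exact/vE/(leq_trans ii' i'j).
  apply: Ez => //; move: i'j; rewrite leq_eqVlt.
  by case/orP=> [/eqP/val_inj i'j | //]; case: ne.
Qed.

Lemma prefix_solution_exists :
    (forall i : 'I_n, i < k -> P i (y i)) ->
  forall d, k + d <= n -> exists z, prefix_solution (k + d) z.
Proof.
move=> Py; elim=> [|d IH] kdn.
  exists y; rewrite addn0; split=> // i j ij jk kj.
  by move: (leq_trans jk kj); rewrite ltnn.
rewrite addnS in kdn *; have [z zr] := IH (ltnW kdn).
by apply: (@prefix_solution_succ (Ordinal kdn) z (leq_addr d k)).
Qed.

End Realization.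

End Columns.

End Semigeneric.

Theorem lemma1 (V : countType) (E : rel V) (HS : is_semigeneric E)
  (n k : nat) (Hkn : k < n)
  (P : 'I_n -> V -> Prop) (HP : forall i, is_column E (P i))
  (Hdist : forall i j : 'I_n, i != j -> ~ (forall x, P i x <-> P j x))
  (y : 'I_n -> V) (Hy : forall i : 'I_n, i < k -> P i (y i))
  (eps : 'I_n -> 'I_n -> bool) :
  exists z : 'I_n -> V,
    (forall i : 'I_n, i < k -> z i = y i) /\
    (forall i : 'I_n, P i (z i)) /\
    (forall i j : 'I_n, i < j -> k <= j -> E (z i) (z j) = eps i j).
Proof.
have kn : k <= n := ltnW Hkn.
have [z] := prefix_solution_exists HS HP Hdist eps Hy (eq_leq (subnKC kn)).
rewrite subnKC // => -[zy Pz Ez].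
by exists z; do !split=> //; [move=> i; apply: Pz | move=> i j ij; apply: Ez].
Qed.
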